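(* For every Büchi automaton $A$ over the alphabet $2^{AP}$, $\mathrm{supp}(A)$ is an LTL theory, i.e., $\mathrm{Cn}_{LTL}(\mathrm{supp}(A))=\mathrm{supp}(A)$.
   Context: Fix a finite nonempty $AP$. LTL formulae $\varphi::=\bot\mid p\mid\neg\varphi\mid\varphi\lor\varphi\mid X\varphi\mid\varphi U\varphi$ with the standard trace semantics over $(2^{AP})^\omega$. Kripke structure $M=(S,I,T,\lambda)$: finite $S$, nonempty $I\subseteq S$, left-total $T$, $\lambda:S\to2^{AP}$; traces $\lambda(s_0)\lambda(s_1)\dots$ along paths from $I$; $M\models\varphi$ iff all traces of $M$ satisfy $\varphi$. $\mathrm{Cn}_{LTL}(X)$ = formulae satisfied by every Kripke structure satisfying all of $X$. Büchi automaton $A=(Q,\Sigma,\Delta,Q_0,R)$ accepts an infinite word iff there is a run from an initial state along $\Delta$ visiting $R$ infinitely often; $\mathcal{L}(A)$ its language. $\mathrm{supp}(A):=\{\varphi\mid\pi\models\varphi\ \forall\pi\in\mathcal{L}(A)\}$. *)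

From mathcomp Require Import all_boot.
Set Implicit Arguments. Unset Strict Implicit. Unset Printing Implicit Defensive.

Section LTL.
Variable AP : finType.

Definition word := nat -> {set AP}.

Inductive ltl : Type :=
| LBot : ltl
| LAtom : AP -> ltl
| LNeg : ltl -> ltl
| LOr : ltl -> ltl -> ltl
| LNext : ltl -> ltl
| LUntil : ltl -> ltl -> ltl.

Fixpoint sat_at (pi : word) (i : nat) (phi : ltl) : Prop :=
  match phi with
  | LBot => False
  | LAtom p => p \in pi i
  | LNeg f => ~ sat_at pi i f
  | LOr f g => sat_at pi i f \/ sat_at pi i g
  | LNext f => sat_at pi i.+1 f
  | LUntil f g => exists k, i <= k /\ sat_at pi k g /\
                    forall j, i <= j -> j < k -> sat_at pi j f
  end.

Definition models (pi : word) (phi : ltl) : Prop := sat_at pi 0 phi.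

Record kripke : Type := Kripke {
  kS : finType;
  kI : {set kS};
  kT : rel kS;
  kL : kS -> {set AP};
  kI_nonempty : kI != set0;
  kT_total : forall s : kS, exists s' : kS, kT s s'
}.

Definition is_trace (M : kripke) (pi : word) : Prop :=
  exists rho : nat -> kS M,
    rho 0 \in @kI M /\ (forall n, @kT M (rho n) (rho n.+1)) /\
    (forall n, pi n = @kL M (rho n)).

Definition kmodels (M : kripke) (phi : ltl) : Prop :=
  forall pi, is_trace M pi -> models pi phi.

Definition CnLTL (X : ltl -> Prop) : ltl -> Prop :=
  fun phi => forall M : kripke, (forall psi, X psi -> kmodels M psi) -> kmodels M phi.

Record buchi : Type := Buchi {
  bQ : finType;
  bDelta : bQ -> {set AP} -> bQ -> bool;
  bQ0 : {set bQ};
  bR : {set bQ}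
}.

Definition accepts (A : buchi) (pi : word) : Prop :=
  exists r : nat -> bQ A,
    r 0 \in @bQ0 A /\ (forall n, @bDelta A (r n) (pi n) (r n.+1)) /\
    (forall n, exists m, n <= m /\ r m \in @bR A).

Definition supp (A : buchi) : ltl -> Prop :=
  fun phi => forall pi, accepts A pi -> models pi phi.

End LTL.

From mathcomp Require Import all_boot zify boolp.
From Stdlib Require List.
Set Implicit Arguments. Unset Strict Implicit. Unset Printing Implicit Defensive.

(* Formulas true on all accepted words trivially hold in every Kripke
   structure satisfying supp A.  Conversely, take an accepted word pi and a
   formula phi.  By pigeonhole over the finitely many automaton states and
   truth assignments to the subformulas of phi, there are positions i < j
   where the run visits the same accepting state, the same subformulas hold,
   and every until subformula true at i is fulfilled before j.  The lasso
   pi[0,j) pi[i,j)^omega is then accepted and agrees with pi on phi.  The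
   Kripke structure whose only trace is this lasso satisfies supp A, hence
   phi; so the lasso, and therefore pi, satisfies phi. *)

Lemma infinitely_often_value (T : finType) (g : nat -> T) (P : nat -> Prop) :
  (forall N, exists m, N <= m /\ P m) ->
  exists c, forall N, exists m, N <= m /\ P m /\ g m = c.
Proof.
move=> inf; apply: contrapT => /forallNP noc.
have /choice [bound Hbound] : forall c, exists N, forall m, N <= m -> P m -> g m != c.
  move=> c; have /existsNP [N HN] := noc c.
  exists N => m Nm Pm; apply/eqP => gmc; apply: HN; by exists m.
have [m [Nm Pm]] := inf (\max_c bound c).
by have /eqP := Hbound (g m) m (leq_trans (leq_bigmax _) Nm) Pm.
Qed.

Lemma bound_seq (T : Type) (Q : T -> nat -> Prop) (s : seq T) :
  (forall x N N', N <= N' -> Q x N -> Q x N') -> (forall x, exists N, Q x N) ->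
  exists N, forall x, List.In x s -> Q x N.
Proof.
move=> Qmono Qex; elim: s => [|y s [N HN]]; first by exists 0.
have [Ny HNy] := Qex y.
exists (maxn N Ny) => x [<-|sx]; first exact: Qmono (leq_maxr _ _) HNy.
exact: Qmono (leq_maxl _ _) (HN x sx).
Qed.

Lemma map_eq_In (T U : Type) (f g : T -> U) (s : seq T) x :
  map f s = map g s -> List.In x s -> f x = g x.
Proof. by elim: s => //= y s IH [fy /IH fs] [<-|/fs]. Qed.

Section Lasso.
Variables i j : nat.
Hypothesis ltij : i < j.

Definition loop_next (x : nat) : nat := if x.+1 < j then x.+1 else i.

Definition loop_pos (n : nat) : nat := iter n loop_next 0.

Lemma loop_posS n : loop_pos n.+1 = loop_next (loop_pos n).
Proof. by []. Qed.

Lemma loop_nextP x : x < j -> loop_next x = x.+1 \/ loop_next x = i /\ x.+1 = j.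
Proof. by rewrite /loop_next; case: ifP => ?; [left | right; split => //; lia]. Qed.

Lemma loop_next_lt x : loop_next x < j.
Proof. by rewrite /loop_next; case: ifP. Qed.

Lemma loop_pos_lt n : loop_pos n < j.
Proof. by case: n => [|n] /=; [lia | exact: loop_next_lt]. Qed.

Lemma loop_posD n t : loop_pos n + t < j -> loop_pos (n + t) = loop_pos n + t.
Proof.
elim: t => [|t IH] lt_j; first by rewrite !addn0.
by rewrite addnS loop_posS IH /loop_next ?ifT; lia.
Qed.

Lemma loop_pos_return n : loop_pos (n + (j - loop_pos n)) = i.
Proof.
have lt_j := loop_pos_lt n.
have -> : j - loop_pos n = (j - loop_pos n).-1.+1 by lia.
by rewrite addnS loop_posS loop_posD /loop_next ?ifF; lia.
Qed.

End Lasso.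

Definition lasso (T : Type) (w : nat -> T) (i j : nat) : nat -> T :=
  fun n => w (loop_pos i j n).

Section Subformulas.
Variable AP : finType.
Implicit Types phi psi chi a b : ltl AP.

Fixpoint subformulas phi : seq (ltl AP) :=
  phi :: match phi with
         | LNeg a | LNext a => subformulas a
         | LOr a b | LUntil a b => subformulas a ++ subformulas b
         | _ => [::]
         end.

Definition subformula psi phi : Prop := List.In psi (subformulas phi).

Lemma subformula_refl phi : subformula phi phi.
Proof. by case: phi => *; left. Qed.

Lemma subformula_trans chi psi phi :
  subformula chi psi -> subformula psi phi -> subformula chi phi.
Proof.
rewrite /subformula => cp.
elim: phi => [|p|a IHa|a IHa b IHb|a IHa|a IHa b IHb] /= [e|sp] //;
  try by subst psi.
- by right; apply: IHa.
- by right; apply/List.in_app_iff; move/List.in_app_iff: sp => [/IHa|/IHb]; tauto.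
- by right; apply: IHa.
- by right; apply/List.in_app_iff; move/List.in_app_iff: sp => [/IHa|/IHb]; tauto.
Qed.

Lemma subformula_neg a phi : subformula (LNeg a) phi -> subformula a phi.
Proof. by apply: subformula_trans; right; exact: subformula_refl. Qed.

Lemma subformula_next a phi : subformula (LNext a) phi -> subformula a phi.
Proof. by apply: subformula_trans; right; exact: subformula_refl. Qed.

Lemma subformula_or a b phi :
  subformula (LOr a b) phi -> subformula a phi /\ subformula b phi.
Proof.
by move=> s; split; apply: subformula_trans s; right; apply: List.in_or_app;
  [left | right]; exact: subformula_refl.
Qed.

Lemma subformula_until a b phi :
  subformula (LUntil a b) phi -> subformula a phi /\ subformula b phi.
Proof.
by move=> s; split; apply: subformula_trans s; right; apply: List.in_or_app;
  [left | right]; exact: subformula_refl.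
Qed.

End Subformulas.

Section LassoSemantics.
Variable AP : finType.
Implicit Types (pi : word AP) (phi psi chi a b : ltl AP).

Lemma sat_until_now pi x a b : sat_at pi x b -> sat_at pi x (LUntil a b).
Proof. by move=> bx; exists x; split => //; split => // y ? ?; lia. Qed.

Lemma sat_until_step pi x a b :
  sat_at pi x a -> sat_at pi x.+1 (LUntil a b) -> sat_at pi x (LUntil a b).
Proof.
move=> ax [m [xm [bm am]]]; exists m; split; first lia; split => // y xy ym.
by have [->//|ne] := eqVneq y x; apply: am; lia.
Qed.

Definition until_witnessed_before pi (i N : nat) chi : Prop :=
  if chi is LUntil a b then sat_at pi i chi ->
    exists m, m < N /\ i <= m /\ sat_at pi m b /\
              forall x, i <= x -> x < m -> sat_at pi x a
  else True.

Lemma until_witnessed_before_mono pi i chi N N' :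
  N <= N' -> until_witnessed_before pi i N chi -> until_witnessed_before pi i N' chi.
Proof.
case: chi => //= a b NN' wit /wit [m [mN rest]]; exists m; split => //; lia.
Qed.

Lemma until_witnessed_before_exists pi i chi :
  exists N, until_witnessed_before pi i N chi.
Proof.
case: chi => [||||| a b]; try by exists 0.
have [[m wit]|unsat] := pselect (sat_at pi i (LUntil a b)).
  by exists m.+1 => _; exists m.
by exists 0.
Qed.

Variables (pi : word AP) (phi : ltl AP) (i j : nat).
Hypothesis ltij : i < j.
Hypothesis agree : forall chi, subformula chi phi -> (sat_at pi i chi <-> sat_at pi j chi).
(* The lasso jumps back from [j] to [i], so an eventuality pending at [i]
   must be fulfilled inside the loop. *)
Hypothesis early : forall chi, subformula chi phi -> until_witnessed_before pi i j chi.

Lemma sat_loop_next x chi : x < j -> subformula chi phi ->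
  sat_at pi (loop_next i j x) chi <-> sat_at pi x.+1 chi.
Proof. by move=> /(loop_nextP ltij) [->|[-> ->]] // /agree. Qed.

Lemma lasso_until_sat a b : subformula (LUntil a b) phi ->
  (forall k, sat_at (lasso pi i j) k a -> sat_at pi (loop_pos i j k) a) ->
  (forall k, sat_at (lasso pi i j) k b -> sat_at pi (loop_pos i j k) b) ->
  forall k, sat_at (lasso pi i j) k (LUntil a b) -> sat_at pi (loop_pos i j k) (LUntil a b).
Proof.
move=> sU IHa IHb k [m [km [bm am]]].
suff back d : d <= m - k -> sat_at pi (loop_pos i j (m - d)) (LUntil a b).
  by have := back (m - k) (leqnn _); rewrite subKn.
elim: d => [_|d IH ltd]; first by rewrite subn0; apply/sat_until_now/IHb.
have e : m - d = (m - d.+1).+1 by lia.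
apply: sat_until_step; first by apply/IHa/am; lia.
apply/(sat_loop_next (loop_pos_lt ltij _) sU); rewrite -loop_posS -e.
by apply: IH; lia.
Qed.

Lemma sat_lasso_until a b : subformula (LUntil a b) phi ->
  (forall k, sat_at pi (loop_pos i j k) a -> sat_at (lasso pi i j) k a) ->
  (forall k, sat_at pi (loop_pos i j k) b -> sat_at (lasso pi i j) k b) ->
  forall k, sat_at pi (loop_pos i j k) (LUntil a b) -> sat_at (lasso pi i j) k (LUntil a b).
Proof.
move=> sU IHa IHb k [m [pm [bm am]]].
have ltp := loop_pos_lt ltij k.
have along n x : n <= x -> loop_pos i j n + (x - n) < j ->
    loop_pos i j x = loop_pos i j n + (x - n).
  by move=> nx lt_j; rewrite -(loop_posD ltij) // subnKC.
case: (ltnP m j) => [ltmj|lejm].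
  exists (k + (m - loop_pos i j k)); split; first lia; split.
    by apply: IHb; rewrite (loop_posD ltij) subnKC //; lia.
  by move=> x kx xm; apply: IHa; rewrite (along k) //; [apply: am|]; lia.
have Ui : sat_at pi i (LUntil a b).
  by apply/agree => //; exists m; split => //; split => // x jx xm; apply: am; lia.
have [m2 [ltm2 [im2 [bm2 am2]]]] := early sU Ui.
pose k' := k + (j - loop_pos i j k).
have ret : loop_pos i j k' = i := loop_pos_return ltij k.
exists (k' + (m2 - i)); split; first lia; split.
  by apply: IHb; rewrite (loop_posD ltij) ret subnKC //; lia.
move=> x kx xm; apply: IHa; case: (ltnP x k') => [xk'|k'x].
  by rewrite (along k) //; [apply: am|]; lia.
rewrite (along k') //; last lia.
by rewrite ret; apply: am2; lia.
Qed.

Lemma sat_lasso psi : subformula psi phi ->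
  forall k, sat_at (lasso pi i j) k psi <-> sat_at pi (loop_pos i j k) psi.
Proof.
elim: psi => [|p|a IHa|a IHa b IHb|a IHa|a IHa b IHb] s k //=.
- by rewrite IHa //; exact: subformula_neg s.
- by have [sa sb] := subformula_or s; rewrite IHa // IHb.
- have sa := subformula_next s.
  by rewrite IHa // loop_posS sat_loop_next // (loop_pos_lt ltij).
- have [sa sb] := subformula_until s.
  split; [apply: lasso_until_sat | apply: sat_lasso_until] => // k';
    by [move/(IHa sa) | move/(IHb sb)].
Qed.

End LassoSemantics.

Lemma accepts_lasso (AP : finType) (A : buchi AP) (pi : word AP) (r : nat -> bQ A) i j :
  i < j -> r 0 \in bQ0 A -> (forall n, bDelta (r n) (pi n) (r n.+1)) ->
  r j = r i -> r i \in bR A -> accepts A (lasso pi i j).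
Proof.
move=> ltij r0 rstep rji ri; exists (lasso r i j); split => //; split.
  move=> n; rewrite /lasso loop_posS.
  have [->|[-> e]] := loop_nextP ltij (loop_pos_lt ltij n); first exact: rstep.
  by have := rstep (loop_pos i j n); rewrite e rji.
move=> N; exists (N + (j - loop_pos i j N)).
by rewrite /lasso loop_pos_return //; split=> //; lia.
Qed.

Section LassoKripke.
Variables (AP : finType) (pi : word AP) (i j : nat).
Hypothesis ltij : i < j.

Lemma lasso_init_nonempty : [set s : 'I_j | val s == 0] != set0.
Proof. by apply/set0Pn; exists (Ordinal (leq_ltn_trans (leq0n i) ltij)); rewrite inE. Qed.

Lemma lasso_step_total (s : 'I_j) : exists s' : 'I_j, val s' == loop_next i j s.
Proof. by exists (Ordinal (loop_next_lt ltij s)). Qed.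

Definition lasso_kripke : kripke AP :=
  @Kripke AP 'I_j [set s | val s == 0] (fun s s' => val s' == loop_next i j s)
    (fun s => pi s) lasso_init_nonempty lasso_step_total.

Lemma lasso_kripke_traceP w : is_trace lasso_kripke w <-> w = lasso pi i j.
Proof.
split=> [[rho [rho0 [rhoT rhoL]]]|->].
  have pos n : val (rho n) = loop_pos i j n.
    elim: n => [|n IH]; first by move: rho0; rewrite inE => /eqP.
    by move/eqP: (rhoT n) => /= ->; rewrite IH.
  by apply: funext => n; rewrite rhoL /= pos.
by exists (fun n => Ordinal (loop_pos_lt ltij n)); rewrite inE; split=> //; split=> n /=.
Qed.

End LassoKripke.

Lemma accepted_lasso_agreeing (AP : finType) (A : buchi AP) (pi : word AP) (phi : ltl AP) :
  accepts A pi -> exists i j, i < j /\ accepts A (lasso pi i j) /\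
    (models (lasso pi i j) phi <-> models pi phi).
Proof.
move=> [r [r0 [rstep rinf]]].
pose type k := map_tuple (fun chi => `[< sat_at pi k chi >]) (in_tuple (subformulas phi)).
have [c recur] := infinitely_often_value (fun k => (r k, type k)) rinf.
have [i [_ [Ri ci]]] := recur 0.
have [N early] := bound_seq (subformulas phi) (@until_witnessed_before_mono AP pi i)
                            (until_witnessed_before_exists pi i).
have [j [jN [_ cj]]] := recur (maxn N i.+1).
have ltij : i < j by lia.
move: cj; rewrite -{}ci => -[rji type_ji].
exists i, j; split=> //; split; first exact: accepts_lasso ltij r0 rstep rji Ri.
apply: (@sat_lasso _ pi phi i j ltij _ _ phi (subformula_refl phi) 0).
- move=> chi s; apply: iff_sym; apply: asbool_eq_equiv; exact: map_eq_In type_ji s.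
- by move=> chi /early; apply: until_witnessed_before_mono; lia.
Qed.

Theorem mainTheorem13 (AP : finType) (hAP : 0 < #|AP|) (A : buchi AP) :
  forall phi : ltl AP, CnLTL (supp A) phi <-> supp A phi.
Proof.
move=> phi; split=> [cn pi acc|supp_phi M M_supp]; last exact: M_supp.
have [i [j [ltij [acc_lasso agree]]]] := accepted_lasso_agreeing phi acc.
have M_supp : forall psi, supp A psi -> kmodels (lasso_kripke pi ltij) psi.
  by move=> psi supp_psi w /lasso_kripke_traceP ->; exact: supp_psi.
by apply/agree/(cn _ M_supp); apply/lasso_kripke_traceP.
Qed.
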